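(* Let $G$ be a connected graph of minimum degree at least three and let $(A,B)$ be a partition of $V(G)$ with $A\neq\emptyset$ and $B\neq\emptyset$. Let $C$ be any cycle in $G$. Then, unless $G$ is bipartite with bipartition $(A,B)$ (i.e. every edge of $G$ has one end in $A$ and the other in $B$), for every integer $\ell$ with $1\leq \ell<|V(C)|$ there is an $A$-$B$ path of length $\ell$ in $G$.
   Context: Graphs are finite and simple. An $A$-$B$ path is a path with one end in $A$ and the other end in $B$. The length of a path is its number of edges. *)

From mathcomp Require Import all_boot.
Set Implicit Arguments. Unset Strict Implicit. Unset Printing Implicit Defensive.

Definition simple_graph (T : finType) (e : rel T) : Prop :=
  symmetric e /\ irreflexive e.

Definition connected_graph (T : finType) (e : rel T) : Prop :=
  forall x y : T, connect e x y.

Definition min_degree_ge (T : finType) (e : rel T) (k : nat) : Prop :=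
  forall x : T, k <= #|[set y | e x y]|.

Definition is_cycle (T : finType) (e : rel T) (c : seq T) : Prop :=
  [/\ 3 <= size c, uniq c & cycle e c].

(* A path x :: p (vertices x, p_1, ..., p_k) of length size p:
   distinct vertices, consecutive ones adjacent. *)
Definition is_path (T : finType) (e : rel T) (x : T) (p : seq T) : Prop :=
  uniq (x :: p) /\ path e x p.

Definition AB_path (T : finType) (e : rel T) (A B : {set T})
  (x : T) (p : seq T) : Prop :=
  is_path e x p /\
  ((x \in A /\ last x p \in B) \/ (x \in B /\ last x p \in A)).

Definition bipartite_with (T : finType) (e : rel T) (A B : {set T}) : Prop :=
  forall x y : T, e x y ->
    (x \in A /\ y \in B) \/ (x \in B /\ y \in A).

From mathcomp Require Import all_boot zify.
From Stdlib Require Import Classical.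
Set Implicit Arguments. Unset Strict Implicit. Unset Printing Implicit Defensive.

(* Without such paths every path of length l has both ends on the same side
   of A ([same_side_of_no_AB_path]).  Paths are functions [nat -> T]
   ([fun_path]) and C is a periodic enumeration [v] ([ncycle]); an edge is
   [crossing] when it joins A to its complement.
   1. Comparing paths of length l that run along C, around a chord of C or
      through a neighbour off C shows that a neighbour of [v 0] other than
      [v 1], [v n.-1] lies on the side of both ([third_neighbour]).
   2. By minimum degree 3, [v i.-1] and [v i.+1] then lie on one side, so all
      edges at cycle vertices share one crossing type ([cycle_edge_crossing]).
   3. By induction on its length, a path ending on C starts with an edge of
      that type ([path_to_cycle_crossing]); by connectivity every edge has it
      ([all_edges_crossing]).
   4. If all edges cross, G is bipartite with (A, B); if none does, A is
      closed under adjacency, contradicting connectivity. *)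

Section FunctionPaths.
Variables (T : Type) (e : rel T).

Definition fun_path (l : nat) (f : nat -> T) : Prop :=
  (forall t, t < l -> e (f t) (f t.+1)) /\
  (forall a b, a <= l -> b <= l -> f a = f b -> a = b).

Lemma fun_path_prefix l k f : k <= l -> fun_path l f -> fun_path k f.
Proof.
move=> kl [adj inj]; split=> [t tk | a b ak bk]; first by apply: adj; lia.
by apply: inj; lia.
Qed.

Lemma fun_path_suffix l k f :
  k <= l -> fun_path l f -> fun_path (l - k) (fun t => f (k + t)).
Proof.
move=> kl [adj inj]; split=> [t tk | a b ak bk E].
  by rewrite addnS; apply: adj; lia.
suff : k + a = k + b by lia.
by apply: inj E; lia.
Qed.

End FunctionPaths.

Lemma last_iota m k : last m (iota m.+1 k) = m + k.
Proof. by elim: k m => [|k IH] m /=; rewrite ?addn0 // IH addnS. Qed.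

Section SeqPaths.
Variables (T : finType) (e : rel T).

Lemma path_iota (f : nat -> T) m k :
  (forall t, m <= t < m + k -> e (f t) (f t.+1)) ->
  path e (f m) (map f (iota m.+1 k)).
Proof.
elim: k m => [|k IH] m adj //=; apply/andP; split; first by apply: adj; lia.
by apply: IH => t ht; apply: adj; lia.
Qed.

Lemma fun_path_is_path l f : fun_path e l f ->
  [/\ is_path e (f 0) (map f (iota 1 l)),
      last (f 0) (map f (iota 1 l)) = f l & size (map f (iota 1 l)) = l].
Proof.
move=> [adj inj]; split; last by rewrite size_map size_iota.
- split; last by apply: path_iota => t ht; apply: adj; lia.
  rewrite (_ : f 0 :: _ = map f (iota 0 l.+1)) //.
  rewrite map_inj_in_uniq ?iota_uniq // => a b; rewrite !mem_iota => ha hb.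
  by apply: inj; lia.
- by rewrite last_map last_iota.
Qed.

Lemma is_path_fun_path x p :
  is_path e x p -> fun_path e (size p) (fun t => nth x (x :: p) t).
Proof.
move=> [up pp]; split=> [t tp | a b ha hb /eqP]; first by move/(pathP x): pp; apply.
by rewrite nth_uniq // => /eqP.
Qed.

Lemma edge_path_to x y z : symmetric e -> irreflexive e -> e x y -> connect e x z ->
  exists u w p, [/\ is_path e u (w :: p), last w p = z &
                    (u = x /\ w = y) \/ (u = y /\ w = x)].
Proof.
move=> esym eirr exy /connectP [q qpath ->].
case: (shortenP qpath) => p pp up _.
case: (boolP (y \in p)) => yp.
- move: up pp; case/splitPr: yp => p1 p2.
  rewrite last_cat /= cat_path cat_uniq /= mem_cat !inE => up pp.
  exists x, y, p2; split=> //; last by left.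
  split; last by case/and3P: pp => _ _ pp2; rewrite /= exy.
  case/and5P: up => /norP [_ /norP [xy xp2]] _ _ yp2 up2.
  by rewrite /= inE negb_or xy xp2 yp2 up2.
- exists y, x, p; split; [ | by [] | by right].
  split; last by rewrite /= esym exy.
  rewrite cons_uniq up andbT in_cons negb_or yp andbT.
  by apply: contraTneq exy => ->; rewrite eirr.
Qed.

End SeqPaths.

Definition ncycle (T : Type) (e : rel T) (n : nat) (v : nat -> T) : Prop :=
  [/\ forall k, e (v k) (v k.+1), forall k, v (k + n) = v k &
      forall a b, a < n -> b < n -> v a = v b -> a = b].

(* The same cycle traversed in the opposite direction. *)
Definition reverse_cycle (T : Type) (n : nat) (v : nat -> T) (k : nat) : T :=
  v (n - k %% n).

Section CycleFacts.
Variables (T : Type) (e : rel T) (n : nat) (v : nat -> T).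
Hypothesis cyc : ncycle e n v.
Hypothesis n_gt0 : 0 < n.

Lemma cycle_mod k : v k = v (k %% n).
Proof.
case: cyc => _ per _; rewrite {1}(divn_eq k n).
by elim: (k %/ n) => [|q IH]; rewrite ?mul0n ?add0n // mulSnr addnAC per.
Qed.

Lemma cycle_wrap : v n = v 0.
Proof. by case: cyc => _ per _; rewrite -{1}(add0n n) per. Qed.

Lemma cycle_shift i : ncycle e n (fun k => v (i + k)).
Proof.
case: cyc => adj per inj; split=> [k | k | a b an bn E]; rewrite ?addnS ?addnA ?per //.
have /eqP : (i + a) %% n = (i + b) %% n by apply: inj; rewrite ?ltn_pmod // -!cycle_mod.
by rewrite eqn_modDl !modn_small // => /eqP.
Qed.

Lemma cycle_rev : symmetric e -> ncycle e n (reverse_cycle n v).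
Proof.
move=> esym; case: cyc => adj per inj; rewrite /reverse_cycle; split.
- move=> k; have kn : k %% n < n by rewrite ltn_pmod.
  case: (ltnP (k %% n).+1 n) => h.
  + have -> : k.+1 %% n = (k %% n).+1.
      by rewrite -addn1 -modnDml addn1 modn_small.
    by rewrite (_ : n - k %% n = (n - (k %% n).+1).+1) 1?esym //; lia.
  + have kE : k %% n = n.-1 by lia.
    have -> : k.+1 %% n = 0 by rewrite -addn1 -modnDml kE addn1 prednK // modnn.
    rewrite kE subn0 cycle_wrap.
    by rewrite (_ : n - n.-1 = 1) 1?esym //; lia.
- by move=> k; rewrite modnDr.
- move=> a b an bn; rewrite !modn_small //.
  case: a an => [|a] an; case: b bn => [|b] bn //; rewrite ?subn0 ?cycle_wrap;
    move/inj; lia.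
Qed.

Lemma reverse_cycle0 : reverse_cycle n v 0 = v 0.
Proof. by rewrite /reverse_cycle mod0n subn0 cycle_wrap. Qed.

Lemma reverse_cycleE s : 0 < s <= n -> reverse_cycle n v (n - s) = v s.
Proof.
move=> /andP [s0 sn]; rewrite /reverse_cycle.
case: (ltngtP s n) => [sn' | | ->]; [ | lia | by rewrite subnn mod0n subn0].
by rewrite modn_small; [congr v; lia | lia].
Qed.

Lemma cycle_fun_path l idx :
  (forall t, t < l -> e (v (idx t)) (v (idx t.+1))) ->
  (forall t, t <= l -> idx t < n) ->
  (forall a b, a <= l -> b <= l -> idx a = idx b -> a = b) ->
  fun_path e l (fun t => v (idx t)).
Proof.
case: cyc => _ _ inj adj bnd idx_inj; split=> // a b al bl /inj E.
by apply: idx_inj => //; apply: E; apply: bnd.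
Qed.

Lemma cycle_arc_fun_path l k : l < n -> fun_path e l (fun t => v (k + t)).
Proof.
move=> ln; have [adj _ inj] := cycle_shift k.
by split=> [t _ | a b al bl]; [exact: adj | apply: inj; lia].
Qed.

End CycleFacts.

Lemma ncycle_of_seq (T : finType) (e : rel T) (x0 : T) (c : seq T) :
  uniq (x0 :: c) -> cycle e (x0 :: c) ->
  ncycle e (size (x0 :: c)) (fun k => nth x0 (x0 :: c) (k %% size (x0 :: c))).
Proof.
set s := x0 :: c; set n := size s => us cs.
have n_gt0 : 0 < n by [].
have nE : n = (size c).+1 by [].
have step r : r < n -> e (nth x0 s r) (nth x0 s (r.+1 %% n)).
  move=> rn; move: cs; rewrite /cycle /= => /(pathP x0) /(_ r).
  rewrite size_rcons => /(_ rn).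
  have -> : nth x0 (x0 :: rcons c x0) r = nth x0 s r.
    by case: r rn => [|r] rn //=; rewrite nth_rcons; case: ifP => //; lia.
  rewrite nth_rcons /n /=; case: ifP => h; first by rewrite modn_small.
  by rewrite (_ : r = size c) ?eqxx ?modnn //; lia.
split=> [k | k | a b an bn].
- by have := step _ (ltn_pmod k n_gt0); rewrite -[(k %% n).+1]addn1 modnDml addn1.
- by rewrite modnDr.
- by rewrite !modn_small // => /eqP; rewrite nth_uniq // => /eqP.
Qed.

Definition same_side_paths (T : finType) (e : rel T) (A : {set T}) (l : nat) :=
  forall f, fun_path e l f -> (f 0 \in A) = (f l \in A).

Lemma partition_memB (T : finType) (A B : {set T}) y :
  A :&: B = set0 -> A :|: B = [set: T] -> (y \in B) = (y \notin A).
Proof.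
move=> AB0 ABT; have : y \in A :|: B by rewrite ABT inE.
have : y \notin A :&: B by rewrite AB0 inE.
by rewrite !inE; case: (y \in A); case: (y \in B).
Qed.

Lemma same_side_of_no_AB_path (T : finType) (e : rel T) (A B : {set T}) l :
  A :&: B = set0 -> A :|: B = [set: T] ->
  ~ (exists x p, AB_path e A B x p /\ size p = l) -> same_side_paths e A l.
Proof.
move=> AB0 ABT noAB f fp; have [ip lastE sizeE] := fun_path_is_path fp.
apply/idP/idP => h; apply/negPn/negP => h'; apply: noAB;
  exists (f 0), (map f (iota 1 l)); do 2!split => //;
  rewrite lastE (partition_memB _ AB0 ABT) (partition_memB _ AB0 ABT); by [left | right].
Qed.

Section Chords.
Variables (T : finType) (e : rel T) (A : {set T}) (l n : nat) (v : nat -> T).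
Hypothesis esym : symmetric e.
Hypothesis cyc : ncycle e n v.
Hypothesis same : same_side_paths e A l.
Hypothesis l_gt0 : 0 < l.
Hypothesis l_lt_n : l < n.

Let n_gt0 : 0 < n. Proof. exact: leq_ltn_trans l_lt_n. Qed.

Lemma arc_same_side k : (v k \in A) = (v (k + l) \in A).
Proof. by rewrite -[k]addn0 (same (cycle_arc_fun_path cyc n_gt0 k l_lt_n)) addn0. Qed.

Lemma arc_last_same_side : (v n.-1 \in A) = (v l.-1 \in A).
Proof.
case: cyc => _ per _.
by rewrite arc_same_side (_ : n.-1 + l = l.-1 + n) ?per //; lia.
Qed.

(* A neighbour [w] of [v 0] avoiding [v 0], ..., [v l.-1] is on the side
   of [v n.-1]: prepend [w] to the arc [v 0], ..., [v l.-1]. *)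
Lemma off_arc_neighbour w : (forall t, t < l -> w <> v t) -> e (v 0) w ->
  (w \in A) = (v n.-1 \in A).
Proof.
case: cyc => adj _ inj w_off ew; rewrite arc_last_same_side.
have := same (f := fun t => if t is t'.+1 then v t' else w).
rewrite -(prednK l_gt0) /=; apply; split.
- by case=> [|t] ht //=; rewrite esym.
- case=> [|a] [|b] ha hb //= E; [ | | by congr S; apply: inj E; lia].
  + by case: (w_off b); [lia | ].
  + by case: (w_off a); [lia | ].
Qed.

(* A chord from [v 0] to [v s] with [0 < s <= l] forces [v 1] and [v s] to
   the same side: use the path [v 1], ..., [v s], [v 0], [v n.-1], .... *)
Lemma short_chord s : e (v 0) (v s) -> 0 < s <= l -> (v 1 \in A) = (v s \in A).
Proof.
case: cyc => adj per _ es /andP [s_gt0 sl].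
pose idx t := if t < s then t.+1 else if t == s then 0 else n - (t - s).
have idxE t : [\/ t < s /\ idx t = t.+1, t = s /\ idx t = 0 |
                   s < t /\ idx t = n - (t - s)].
  by rewrite /idx; case: (ltngtP t s) => h; [apply: Or31 | apply: Or33 | apply: Or32].
have key : (v (idx 0) \in A) = (v (idx l) \in A).
  apply: (same (f := fun t => v (idx t))).
  apply: (cycle_fun_path cyc) => [t tl | t tl | a b al bl].
  - case: (idxE t.+1) => [[h1 ->]|[h1 ->]|[h1 ->]]; case: (idxE t) => [[h0 ->]|[h0 ->]|[h0 ->]];
      try lia.
    + exact: adj.
    + by rewrite h1 esym.
    + rewrite esym (_ : n - (t.+1 - s) = n.-1); last lia.
      by rewrite -(cycle_wrap cyc) -{2}(prednK n_gt0).
    + by rewrite (_ : n - (t - s) = (n - (t.+1 - s)).+1) 1?esym //; lia.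
  - by case: (idxE t) => [[? ->]|[? ->]|[? ->]]; lia.
  - by case: (idxE a) => [[? ->]|[? ->]|[? ->]]; case: (idxE b) => [[? ->]|[? ->]|[? ->]]; lia.
move: key; rewrite /idx s_gt0; case: (ltngtP l s) => ls; first lia.
- move=> ->; rewrite arc_same_side (_ : n - (l - s) + l = s + n) ?per //; lia.
- by move=> ->; rewrite arc_same_side add0n ls.
Qed.

(* A chord from [v 0] to [v s] with [1 < s] and [s + l <= n] forces [v 1] and
   [v n.-1] to the same side: both start a path [x], [v 0], [v s], [v s.+1], ...
   of length [l] with the same last vertex. *)
Lemma long_chord s : e (v 0) (v s) -> 1 < s -> s + l <= n ->
  (v 1 \in A) = (v n.-1 \in A).
Proof.
case: cyc => adj per _ es s_gt1 sln.
pose idx x t := if t == 0 then x else if t == 1 then 0 else s + t - 2.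
have idxE x t : [\/ t = 0 /\ idx x t = x, t = 1 /\ idx x t = 0 |
                    1 < t /\ idx x t = s + t - 2].
  by rewrite /idx; case: t => [|[|t]]; [apply: Or31 | apply: Or32 | apply: Or33].
have key x : 0 < x < n -> e (v x) (v 0) -> (x < s) || (s + l - 2 < x) ->
    (v x \in A) = (v (idx x l) \in A).
  move=> /andP [x_gt0 xn] ex xs; apply: (same (f := fun t => v (idx x t))).
  apply: (cycle_fun_path cyc) => [[|[|t]] tl | t tl | a b al bl] //=.
  - by rewrite /idx /= addnK.
  - by rewrite /idx /= (_ : s + t.+3 - 2 = (s + t.+2 - 2).+1) //; lia.
  - by case: (idxE x t) => [[? ->]|[? ->]|[? ->]]; lia.
  - by case: (idxE x a) => [[? ->]|[? ->]|[? ->]]; case: (idxE x b) => [[? ->]|[? ->]|[? ->]]; lia.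
rewrite (key 1) ?(key n.-1); try lia.
- by rewrite /idx eqn0Ngt l_gt0.
- by rewrite -(cycle_wrap cyc) -{2}(prednK n_gt0) adj.
- by rewrite esym adj.
Qed.

End Chords.

Section ThirdNeighbour.
Variables (T : finType) (e : rel T) (A : {set T}) (l n : nat) (v : nat -> T).
Hypothesis esym : symmetric e.
Hypothesis eirr : irreflexive e.
Hypothesis cyc : ncycle e n v.
Hypothesis same : same_side_paths e A l.
Hypothesis l_gt0 : 0 < l.
Hypothesis l_lt_n : l < n.

Let n_gt0 : 0 < n. Proof. exact: leq_ltn_trans l_lt_n. Qed.

(* Each case applies
   one of the chord lemmas to the cycle or to its reversal. *)
Lemma third_neighbour w : e (v 0) w -> w <> v 1 -> w <> v n.-1 ->
  (w \in A) = (v 1 \in A) /\ (w \in A) = (v n.-1 \in A).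
Proof.
move=> ew w1 wn; have rcyc := cycle_rev cyc n_gt0 esym.
have rvE := reverse_cycleE v n_gt0.
have r1 : reverse_cycle n v 1 = v n.-1.
  by rewrite -(rvE n.-1); [congr reverse_cycle; lia | lia].
have rn : reverse_cycle n v n.-1 = v 1.
  by rewrite -(rvE 1); [congr reverse_cycle; lia | lia].
case: (cyc) => _ _ inj.
case: (classic (exists s, s < n /\ w = v s)) => [[s [sn ws]] | w_off].
- rewrite {}ws in ew w1 wn *.
  have s0 : s <> 0 by move=> s0; rewrite s0 eirr in ew.
  have s1 : s <> 1 by move=> s1; rewrite s1 in w1.
  have s2 : s <> n.-1 by move=> s2; rewrite s2 in wn.
  have ers : e (reverse_cycle n v 0) (reverse_cycle n v (n - s)).
    by rewrite (reverse_cycle0 cyc) rvE //; lia.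
  case: (leqP l s) => ls.
  + have sE : (v s \in A) = (v n.-1 \in A).
      by apply: (off_arc_neighbour esym cyc same) => // t tl /inj E; lia.
    rewrite sE; split=> //.
    have := long_chord esym rcyc same l_gt0 l_lt_n ers.
    by rewrite r1 rn => ->; lia.
  + have sE := short_chord esym cyc same l_gt0 l_lt_n ew.
    rewrite -sE; last lia.
    split=> //; case: (leqP (s + l) n) => sl.
    * by apply: (long_chord esym cyc same l_gt0 l_lt_n ew); lia.
    * have := short_chord esym rcyc same l_gt0 l_lt_n ers.
      rewrite r1 rvE; last lia.
      by move=> ->; [apply: sE | ]; lia.
- have w_offk k : w <> v k.
    move=> E; apply: w_off; exists (k %% n); split; first by rewrite ltn_pmod.
    by rewrite E (cycle_mod cyc).
  split; last by apply: (off_arc_neighbour esym cyc same) => // t _.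
  rewrite -rn; apply: (off_arc_neighbour esym rcyc same) => //.
  + by move=> t _; apply: w_offk.
  + by rewrite (reverse_cycle0 cyc).
Qed.

End ThirdNeighbour.

Lemma extra_neighbour (T : finType) (e : rel T) x y1 y2 :
  3 <= #|[set y | e x y]| -> exists w, [/\ e x w, w <> y1 & w <> y2].
Proof.
move=> deg; apply: NNPP => no_w.
have : [set y | e x y] \subset [set y1; y2].
  apply/subsetP => y; rewrite !inE => exy; apply/negPn/negP.
  by rewrite negb_or => /andP [/eqP ? /eqP ?]; apply: no_w; exists y.
by move/subset_leq_card; rewrite cards2; case: (y1 != y2) => /=; lia.
Qed.

Definition crossing (T : finType) (A : {set T}) (x y : T) : bool :=
  (x \in A) != (y \in A).

Lemma crossingC (T : finType) (A : {set T}) x y : crossing A x y = crossing A y x.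
Proof. by rewrite /crossing eq_sym. Qed.

Section CycleEdges.
Variables (T : finType) (e : rel T) (A : {set T}) (l n : nat) (v : nat -> T).
Hypothesis esym : symmetric e.
Hypothesis eirr : irreflexive e.
Hypothesis deg3 : min_degree_ge e 3.
Hypothesis cyc : ncycle e n v.
Hypothesis same : same_side_paths e A l.
Hypothesis l_gt0 : 0 < l.
Hypothesis l_lt_n : l < n.

Let n_gt0 : 0 < n. Proof. exact: leq_ltn_trans l_lt_n. Qed.

Lemma neighbour_side i w : e (v i) w -> (w \in A) = (v i.+1 \in A).
Proof.
move=> ew; have vi := third_neighbour esym eirr (cycle_shift cyc n_gt0 i) same l_gt0 l_lt_n.
rewrite /= addn0 addn1 in vi.
have [w' [ew' w'1 w'2]] := extra_neighbour (v i.+1) (v (i + n.-1)) (deg3 (v i)).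
have [w'_succ w'_pred] := vi _ ew' w'1 w'2.
case: (classic (w = v i.+1)) => [-> // | w1].
case: (classic (w = v (i + n.-1))) => [-> | w2]; first by rewrite -w'_pred.
by have [-> _] := vi _ ew w1 w2.
Qed.

(* Consecutive cycle edges have the same crossing type, since [v i] and
   [v i.+2] are neighbours of [v i.+1] ... *)
Lemma cycle_step_crossing i : crossing A (v i) (v i.+1) = crossing A (v 0) (v 1).
Proof.
elim: i => [// | i IH]; case: cyc => adj _ _.
have side : (v i \in A) = (v i.+2 \in A) by apply: neighbour_side; rewrite esym adj.
by rewrite -IH /crossing -side eq_sym.
Qed.

Lemma cycle_edge_crossing i w : e (v i) w -> crossing A (v i) w = crossing A (v 0) (v 1).
Proof. by move=> ew; rewrite -(cycle_step_crossing i) /crossing (neighbour_side ew). Qed.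

(* If the path meets the cycle, or an edge of the
   other type, before its end, induct on the shorter prefix or suffix;
   otherwise extend it along the cycle to a path of length [l.+1]: its first
   and last edge then have equal crossing types, as [same] applies both to
   its first [l] and its last [l] edges. *)
Lemma path_to_cycle_crossing m p i : fun_path e m.+1 p -> p m.+1 = v i ->
  crossing A (p 0) (p 1) = crossing A (v 0) (v 1).
Proof.
set g := crossing A (v 0) (v 1).
elim/ltn_ind: m p i => m IH p i pp p_end.
case: (classic (exists t k, 0 < t <= m /\ p t = v k)) => [[t [k [/andP [t0 tm] pt]]] | nC].
  apply: (IH t.-1 _ p k); [lia | apply: fun_path_prefix pp; lia | by rewrite prednK].
case: (classic (exists t, 0 < t <= m /\ crossing A (p t) (p t.+1) != g)) =>
  [[t [/andP [t0 tm] /eqP []]] | nB].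
  have := IH (m - t) _ (fun u => p (t + u)) i; rewrite /= addn0 addn1; apply; first lia.
  - by rewrite -subSn; [apply: fun_path_suffix pp; lia | lia].
  - by rewrite (_ : t + (m - t).+1 = m.+1) //; lia.
case: (classic (exists k, p 0 = v k)) => [[k p0] | nX].
  by rewrite p0 cycle_edge_crossing // -p0; case: pp => adj _; apply: adj.
have p_off a k : a <= m -> p a <> v k.
  move=> am pa; case: a am pa => [|a] am pa; first by apply: nX; exists k.
  by apply: nC; exists a.+1, k.
pose F t := if t <= m.+1 then p t else v (i + (t - m.+1)).
have Fp t : t <= m.+1 -> F t = p t by rewrite /F => ->.
have Fv t : m.+1 <= t -> F t = v (i + (t - m.+1)).
  move=> mt; rewrite /F; case: leqP => // tm.
  by rewrite (_ : t = m.+1) ?subnn ?addn0 //; lia.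
have Fpath : fun_path e l.+1 F.
  have [adj _ inj] := cycle_shift cyc n_gt0 i; case: pp => padj pinj.
  split=> [t tl | a b al bl].
  - case: (leqP m.+1 t) => tm.
      by rewrite Fv // Fv 1?leqW // subSn // addnS; apply: adj.
    by rewrite Fp 1?ltnW // Fp //; apply: padj.
  - case: (leqP m.+1 a) => am; case: (leqP m.+1 b) => bm.
    + by rewrite !Fv // => /inj; lia.
    + by rewrite Fv // Fp 1?ltnW // => E; case: (p_off b _ bm (Logic.eq_sym E)).
    + by rewrite Fp 1?ltnW // Fv // => E; case: (p_off a _ am E).
    + by rewrite !Fp 1?ltnW // => /pinj; lia.
have first_side : (F 0 \in A) = (F l \in A) := same (fun_path_prefix (leqnSn l) Fpath).
have second_side : (F 1 \in A) = (F l.+1 \in A).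
  by have := fun_path_suffix (ltn0Sn l) Fpath; rewrite subn1 /= => /same; rewrite add1n.
have last_edge : crossing A (F l) (F l.+1) = g.
  case: (leqP l m) => lm.
  - rewrite Fp ?(leqW lm) // Fp ?ltnS //; apply: NNPP => ng.
    by apply: nB; exists l; rewrite l_gt0 lm; split=> //; apply/eqP.
  - case: Fpath => Fadj _; have := Fadj l (ltnSn l).
    by rewrite (Fv l) //; apply: cycle_edge_crossing.
by rewrite -(Fp 0) // -(Fp 1) // -last_edge /crossing first_side second_side.
Qed.

(* In a connected graph every edge lies on a path to the cycle, so all edges
   have the crossing type of the cycle. *)
Lemma all_edges_crossing : connected_graph e ->
  forall x y, e x y -> crossing A x y = crossing A (v 0) (v 1).
Proof.
move=> conn x y exy.
have [u [w [p [ip p_last uw]]]] := edge_path_to esym eirr exy (conn x (v 0)).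
have p_end : nth u (u :: w :: p) (size (w :: p)) = v 0.
  by rewrite -(last_nth u u (w :: p)); exact: p_last.
have /= <- := path_to_cycle_crossing (is_path_fun_path ip) p_end.
by case: uw => [[-> ->] | [-> ->]]; rewrite // crossingC.
Qed.

End CycleEdges.

Theorem lemma3p2 (T : finType) (e : rel T) (A B : {set T}) (c : seq T) :
  simple_graph e ->
  connected_graph e ->
  min_degree_ge e 3 ->
  A :&: B = set0 -> A :|: B = [set: T] ->
  A != set0 -> B != set0 ->
  is_cycle e c ->
  ~ bipartite_with e A B ->
  forall l : nat, 1 <= l < size c ->
    exists (x : T) (p : seq T), AB_path e A B x p /\ size p = l.
Proof.
move=> [esym eirr] conn deg AB0 ABT An Bn [_ cu cc] not_bip l /andP [l_gt0 lc].
apply: NNPP => noAB; have same := same_side_of_no_AB_path AB0 ABT noAB.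
case: c cu cc lc => [//|x0 c] cu cc lc.
have all_crossing := all_edges_crossing esym eirr deg (ncycle_of_seq cu cc) same l_gt0 lc conn.
have memB := partition_memB _ AB0 ABT.
case: (crossing A _ _) in all_crossing.
- apply: not_bip => x y /all_crossing; rewrite /crossing !memB.
  by case: (x \in A); case: (y \in A) => // _; [left | right].
- have A_closed : closed e (mem A).
    by move=> x y /all_crossing /negbT; rewrite negbK => /eqP.
  case/set0Pn: An => a aA; case/set0Pn: Bn => b bB.
  have : (a \in A) = (b \in A) := closed_connect A_closed (conn a b).
  by rewrite aA -[b \in A]negbK -memB bB.
Qed.
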